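(* Let $M\subseteq\mathbb{R}^n$ be a lattice-free polyhedron given by $M=\{x\in\mathbb{R}^n:a_i\cdot x\le b_i\ \forall i\in[m]\}$ with $m\in\mathbb{N}$, $a_1,\dots,a_m\in\mathbb{R}^n\setminus\{0\}$, $b_1,\dots,b_m\in\mathbb{R}$. Then there is a nonempty subset $I\subseteq[m]$ such that $P=\{x\in\mathbb{R}^n:a_i\cdot x\le b_i\ \forall i\in I\}$ can be represented as a direct Minkowski sum $P=\Delta\oplus U$, where $U$ is a $k$-dimensional linear subspace of $\mathbb{R}^n$ with $k\in\{0,\dots,n-1\}$ and $\Delta$ is an $(n-k)$-dimensional simplex.
   Context: A set $B\subseteq\mathbb{R}^n$ is lattice-free if it is an $n$-dimensional closed convex set with $\operatorname{int}(B)\cap\mathbb{Z}^n=\emptyset$. $[m]=\{1,\dots,m\}$. A Minkowski sum $A+B$ is direct, written $A\oplus B$, if every point of $A+B$ has a unique representation $a+b$ with $a\in A$, $b\in B$. *)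

(* Points of R^n are row vectors 'rV[R]_n
   over an abstract R : realType, with the library's (product/sup-norm)
   topology on matrices. *)
From HB Require Import structures.
From mathcomp Require Import all_boot all_order all_algebra.
From mathcomp Require Import all_classical all_reals all_analysis.
Set Implicit Arguments. Unset Strict Implicit. Unset Printing Implicit Defensive.
Import Order.TTheory GRing.Theory Num.Theory.
Import numFieldNormedType.Exports.
Local Open Scope classical_set_scope.
Local Open Scope ring_scope.

Section Defs.
Variables (R : realType) (n : nat).
Notation vec := 'rV[R]_n.

Definition dotv (a x : vec) : R := \sum_(j < n) a 0 j * x 0 j.

Definition lattice_point (x : vec) : Prop :=
  exists z : 'I_n -> int, x = \row_j (z j)%:~R.

Definition convex_set (S : set vec) : Prop :=
  forall x y (t : R), S x -> S y -> 0 <= t -> t <= 1 -> S (t *: x + (1 - t) *: y).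

Definition aff_indep (d : nat) (p : 'I_d.+1 -> vec) : bool :=
  row_free (\matrix_(i < d) (p (lift ord0 i) - p ord0)).

Definition affdim_eq (S : set vec) (d : nat) : Prop :=
  (exists p : 'I_d.+1 -> vec, (forall i, S (p i)) /\ aff_indep p) /\
  (forall p : 'I_d.+2 -> vec, (forall i, S (p i)) -> ~~ aff_indep p).

Definition conv_pts (d : nat) (p : 'I_d.+1 -> vec) : set vec :=
  [set x | exists l : 'I_d.+1 -> R, (forall i, 0 <= l i) /\
           \sum_i l i = 1 /\ x = \sum_i l i *: p i].

Definition simplex (S : set vec) (d : nat) : Prop :=
  exists p : 'I_d.+1 -> vec, aff_indep p /\ S = conv_pts p.

Definition lattice_free (B : set vec) : Prop :=
  [/\ affdim_eq B n, closed B, convex_set B &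
      forall x, interior B x -> ~ lattice_point x].

Definition polyh (m : nat) (a : 'I_m -> vec) (b : 'I_m -> R) (I : {set 'I_m})
  : set vec := [set x | forall i, i \in I -> dotv (a i) x <= b i].

Definition direct_msum (P A B : set vec) : Prop :=
  P = [set x | exists2 y, A y & exists2 z, B z & x = y + z] /\
  forall y1 y2 z1 z2, A y1 -> A y2 -> B z1 -> B z2 ->
    y1 + z1 = y2 + z2 -> y1 = y2 /\ z1 = z2.

End Defs.

(* Gordan's alternative applied to the rows a_i: either some x has a_i . x > 0
   for all i, or the a_i have a nonnegative nontrivial linear dependence.  In
   the first case M contains a ray along -x on which every constraint becomes
   strict with a margin exceeding the rounding error, so rounding a far point
   of the ray down gives a lattice point in the interior of M.  In the second
   case, shrinking the support produces a dependence sum_j lam_j a_(h j) = 0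
   with lam > 0 on a circuit, i.e. the a_(h j) with one index removed are
   linearly independent.  For I the image of h, the slacks
   s_j(x) = b_(h j) - a_(h j) . x satisfy sum_j lam_j s_j(x) = B constantly,
   and B > 0 because otherwise the full-dimensional M would lie in the
   hyperplane a_(h 0) . x = b_(h 0).  Hence x |-> s(x) maps P_I onto the
   simplex {s >= 0 | sum_j lam_j s_j = B}, with kernel the subspace U on which
   all a_(h j) vanish, and lifting the vertices of that simplex gives
   P_I = Delta (+) U. *)

From HB Require Import structures.
From mathcomp Require Import all_boot all_order all_algebra.
From mathcomp Require Import all_classical all_reals all_analysis.
From mathcomp Require Import ring lra.
Import Order.TTheory GRing.Theory Num.Theory.
Import numFieldNormedType.Exports.
Set Implicit Arguments.
Unset Strict Implicit.
Unset Printing Implicit Defensive.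
Local Open Scope classical_set_scope.
Local Open Scope ring_scope.

Section Dotv.
Variables (R : realType) (n : nat).
Local Notation vec := 'rV[R]_n.
Implicit Types (a x y : vec).

Lemma dotvC a x : dotv a x = dotv x a.
Proof. by apply: eq_bigr => j _; rewrite mulrC. Qed.

Lemma dotvDr a x y : dotv a (x + y) = dotv a x + dotv a y.
Proof.
by rewrite /dotv -big_split; apply: eq_bigr => j _; rewrite mxE mulrDr.
Qed.

Lemma dotvZr a t x : dotv a (t *: x) = t * dotv a x.
Proof.
by rewrite /dotv mulr_sumr; apply: eq_bigr => j _; rewrite mxE mulrCA.
Qed.

Lemma dotv0r a : dotv a 0 = 0.
Proof. by rewrite -(scale0r 0) dotvZr mul0r. Qed.

Lemma dotvNr a x : dotv a (- x) = - dotv a x.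
Proof. by rewrite -scaleN1r dotvZr mulN1r. Qed.

Lemma dotvBr a x y : dotv a (x - y) = dotv a x - dotv a y.
Proof. by rewrite dotvDr dotvNr. Qed.

Lemma dotv_sumr (I : Type) (r : seq I) (P : pred I) (F : I -> vec) a :
  dotv a (\sum_(i <- r | P i) F i) = \sum_(i <- r | P i) dotv a (F i).
Proof. exact: (big_morph (dotv a) (dotvDr a) (dotv0r a)). Qed.

Lemma dotvv_gt0 a : a != 0 -> 0 < dotv a a.
Proof.
move=> a_neq0; have sq_ge0 j : 0 <= a 0 j * a 0 j by rewrite -expr2 sqr_ge0.
rewrite lt_def sumr_ge0 ?andbT //; apply: contra a_neq0 => /eqP/psumr_eq0P a0.
apply/eqP/rowP => j; have /eqP := a0 (fun j _ => sq_ge0 j) j isT.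
by rewrite mxE mulf_eq0 orbb => /eqP.
Qed.

Lemma mulmx_trE m (A : 'M[R]_(m, n)) x i : (x *m A^T) 0 i = dotv (row i A) x.
Proof. by rewrite mxE; apply: eq_bigr => j _; rewrite !mxE mulrC. Qed.

Lemma dotv_continuous a : continuous (dotv a).
Proof.
rewrite /dotv; elim: (index_enum _) => [|j s IHs].
  by under eq_fun do rewrite big_nil; exact: cst_continuous.
under eq_fun do rewrite big_cons.
move=> x; apply: continuousD (IHs x).
by apply: continuousM; [exact: cst_continuous | exact: coord_continuous].
Qed.

Lemma dependence_dotv (I : finType) (c : I -> vec) (lam : I -> R) x :
  \sum_j lam j *: c j = 0 -> \sum_j lam j * dotv (c j) x = 0.
Proof.
move=> dep; rewrite -[RHS](dotv0r x) -dep dotv_sumr.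
by apply: eq_bigr => j _; rewrite dotvZr dotvC.
Qed.

Lemma dependence_slack (I : finType) (c : I -> vec) (lam beta : I -> R) x :
  \sum_j lam j *: c j = 0 ->
  \sum_j lam j * (beta j - dotv (c j) x) = \sum_j lam j * beta j.
Proof.
move=> dep; under eq_bigr do rewrite mulrBr.
by rewrite sumrB dependence_dotv ?subr0.
Qed.

End Dotv.

Lemma ex_shift_gt0 (R : realFieldType) (I : finType) (S : {set I})
    (f g : I -> R) :
  (forall i, i \in S -> 0 < g i) ->
  exists2 t, 0 <= t & forall i, i \in S -> 0 < f i + t * g i.
Proof.
move=> g_gt0; set t := \sum_(j in S) `|f j| / g j.
have t_ge0 : 0 <= t.
  by rewrite sumr_ge0 // => j jS; rewrite divr_ge0 // ltW ?g_gt0.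
exists (t + 1) => [|i iS]; first by rewrite addr_ge0.
have gi_gt0 := g_gt0 i iS.
have : `|f i| <= t * g i.
  rewrite -ler_pdivrMr // /t (bigD1 i) //= lerDl sumr_ge0 // => j /andP[jS _].
  by rewrite divr_ge0 // ltW ?g_gt0.
have := ler_norm (- f i); rewrite normrN; nra.
Qed.

Section Gordan.
Variables (R : realType) (n : nat) (I : finType).
Local Notation vec := 'rV[R]_n.

Definition pos_dependence (a : I -> vec) (l : I -> R) :=
  [/\ forall i, 0 <= l i, exists i, 0 < l i & \sum_i l i *: a i = 0].

Section EliminationStep.
Variables (a : I -> vec) (S : {set I}) (c : I) (x : vec).
Hypothesis x_pos : forall i, i \in S :\ c -> 0 < dotv (a i) x.
Hypotheses (cS : c \in S) (acx_lt0 : dotv (a c) x < 0).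

(* Fourier-Motzkin elimination of [a c]: every [a' i] is orthogonal to [x]. *)
Let a' i := dotv (a i) x *: a c - dotv (a c) x *: a i.

Let dotv_a' i y :
  dotv (a' i) y = dotv (a i) x * dotv (a c) y - dotv (a c) x * dotv (a i) y.
Proof. by rewrite dotvC dotvBr !dotvZr !(dotvC y). Qed.

Lemma elim_sol_lift y : (forall i, i \in S :\ c -> 0 < dotv (a' i) y) ->
  exists z, forall i, i \in S -> 0 < dotv (a i) z.
Proof.
move=> y_pos; set y' := - dotv (a c) x *: y + dotv (a c) y *: x.
have y'E i : dotv (a i) y' = dotv (a' i) y.
  by rewrite dotvDr !dotvZr dotv_a'; ring.
have [t _ t_pos] := ex_shift_gt0 (fun i => - dotv (a i) x) y_pos.
exists (t *: y' - x) => i iS; rewrite dotvBr dotvZr y'E.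
have [->|ic] := eqVneq i c; last by rewrite addrC t_pos // !inE ic.
by rewrite dotv_a' subrr mulr0 sub0r oppr_gt0.
Qed.

Lemma elim_dep_lift l : pos_dependence a' l ->
  (forall i, i \notin S :\ c -> l i = 0) ->
  exists2 l', pos_dependence a l' & forall i, i \notin S -> l' i = 0.
Proof.
move=> [l_ge0 [j lj_gt0] dep] l_supp; set s := \sum_j l j * dotv (a j) x.
have term_ge0 k : 0 <= l k * dotv (a k) x.
  have [/x_pos/ltW|/l_supp ->] := boolP (k \in S :\ c); last by rewrite mul0r.
  exact: mulr_ge0.
have s_gt0 : 0 < s.
  have jS : j \in S :\ c by apply: contraTT lj_gt0 => /l_supp ->; rewrite ltxx.
  rewrite /s (bigD1 j) //= ltr_pwDl ?sumr_ge0 // mulr_gt0 // x_pos //.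
have lc0 : l c = 0 by rewrite l_supp // setD11.
exists (fun i => - dotv (a c) x * l i + (i == c)%:R * s); last first.
  move=> i iS; have ic : i != c by apply: contraNneq iS => ->.
  rewrite (negbTE ic) mul0r addr0 l_supp ?mulr0 //.
  by rewrite inE negb_and iS orbT.
split=> [i||].
- by rewrite addr_ge0 ?mulr_ge0 ?ler0n ?oppr_ge0 ?(ltW acx_lt0) ?(ltW s_gt0).
- by exists c; rewrite lc0 mulr0 add0r eqxx mul1r.
have delta_c : \sum_i ((i == c)%:R * s) *: a i = s *: a c.
  rewrite (bigD1 c) //= eqxx mul1r big1 ?addr0 // => i /negbTE->.
  by rewrite mul0r scale0r.
apply: etrans dep; under eq_bigr do rewrite scalerDl.
rewrite big_split /= delta_c.
under [RHS]eq_bigr do rewrite /a' scalerBr !scalerA.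
rewrite sumrB -scaler_suml addrC; congr (_ + _).
by rewrite -sumrN; apply: eq_bigr => i _; rewrite mulNr scaleNr mulrC.
Qed.

End EliminationStep.

Lemma gordan (a : I -> vec) (S : {set I}) :
  (exists x, forall i, i \in S -> 0 < dotv (a i) x) \/
  (exists2 l, pos_dependence a l & forall i, i \notin S -> l i = 0).
Proof.
have [k] := ubnP #|S|; elim: k a S => // k IH a S.
have [->|[c cS]] := set_0Vmem S; first by left; exists 0 => i; rewrite inE.
rewrite (cardsD1 c) cS ltnS add1n => /IH {}IH.
have [[x x_pos]|[l l_dep l_supp]] := IH a; last first.
  by right; exists l => // i iS; rewrite l_supp // inE negb_and iS orbT.
have [ac0|ac_neq0] := eqVneq (a c) 0.
  right; exists (fun i => (i == c)%:R) => [|i]; last first.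
    by move=> iS; case: eqP => // ic; rewrite -ic (negbTE iS) in cS.
  split=> [i||]; [exact: ler0n | by exists c; rewrite eqxx ltr01 |].
  rewrite (bigD1 c) //= ac0 scaler0 add0r big1 // => i /negbTE->.
  by rewrite scale0r.
have [acx_ge0|acx_lt0] := leP 0 (dotv (a c) x).
  have [t t_ge0 t_pos] := ex_shift_gt0 (fun i => dotv (a i) (a c)) x_pos.
  left; exists (t *: x + a c) => i iS; rewrite dotvDr dotvZr.
  have [->|ic] := eqVneq i c; last by rewrite addrC t_pos // !inE ic.
  by rewrite ltr_wpDl ?mulr_ge0 ?dotvv_gt0.
have [[y y_pos]|[l l_dep l_supp]] :=
  IH (fun i => dotv (a i) x *: a c - dotv (a c) x *: a i).
  by left; exact: (elim_sol_lift acx_lt0 y_pos).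
by right; exact: (elim_dep_lift x_pos cS acx_lt0 l_dep l_supp).
Qed.

End Gordan.

Section LatticePoints.
Variables (R : realType) (n m : nat) (a : 'I_m -> 'rV[R]_n) (b : 'I_m -> R).
Local Notation vec := 'rV[R]_n.

Definition norm1 (v : vec) := \sum_j `|v 0 j|.

Lemma normr_dotv_le (u v : vec) r :
  (forall j, `|v 0 j| <= r) -> `|dotv u v| <= norm1 u * r.
Proof.
move=> v_le; rewrite /dotv /norm1 mulr_suml.
apply: le_trans (ler_norm_sum _ _ _) _.
by apply: ler_sum => j _; rewrite normrM ler_wpM2l.
Qed.

Lemma ex_lattice_point_near (y : vec) :
  exists2 z, lattice_point z & forall j, `|z 0 j - y 0 j| <= 1.
Proof.
exists (\row_j (Num.floor (y 0 j))%:~R) => [|j].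
  by exists (fun j => Num.floor (y 0 j)).
rewrite mxE ler_norml; have := floor_le (y 0 j); have := floorD1_gt (y 0 j).
rewrite intrD; lra.
Qed.

Lemma polyh_strict_interior z :
  (forall i, dotv (a i) z < b i) -> interior (polyh a b [set: 'I_m]) z.
Proof.
move=> z_lt; have near_lt i : \forall x \near z, dotv (a i) x < b i.
  apply: open_nbhs_nbhs; split; last exact: z_lt.
  exact: (open_comp (fun x _ => @dotv_continuous _ _ (a i) x)
    (@open_lt _ (b i))).
by apply: filterS (filter_forall _ near_lt) => x x_lt i _; exact/ltW.
Qed.

Lemma polyh_interior_lattice_point x0 d : polyh a b [set: 'I_m] x0 ->
  (forall i, dotv (a i) d < 0) ->
  exists2 z, lattice_point z & interior (polyh a b [set: 'I_m]) z.
Proof.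
move=> x0P d_lt0; have d_pos i : i \in [set: 'I_m]%SET -> 0 < - dotv (a i) d.
  by rewrite oppr_gt0 d_lt0.
(* far along the ray, the margin [t * - (a i . d)] exceeds [norm1 (a i)],
   which bounds the change of [a i . x] under rounding *)
have [t _ t_pos] := ex_shift_gt0 (fun i => - norm1 (a i)) d_pos.
set y := x0 + t *: d; have [z z_latt z_near] := ex_lattice_point_near y.
exists z => //; apply: polyh_strict_interior => i.
have : `|dotv (a i) (z - y)| <= norm1 (a i) * 1.
  by apply: normr_dotv_le => j; have := z_near j; rewrite !mxE.
have := ler_norm (dotv (a i) (z - y)).
have := x0P i (finset.in_setT i); have := t_pos i (finset.in_setT i).
rewrite /y dotvBr dotvDr dotvZr; lra.
Qed.

End LatticePoints.

Section PositiveCircuits.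
Variables (R : realType) (n : nat) (I : finType) (a : I -> 'rV[R]_n).

Definition pos_circuit (l : I -> R) :=
  pos_dependence a l /\
  forall mu : I -> R, (forall i, l i = 0 -> mu i = 0) ->
    \sum_i mu i *: a i = 0 -> exists t, forall i, mu i = t * l i.

Local Notation supp l := [set i | l i != 0]%SET.

Lemma pos_dependence_shrink l mu : pos_dependence a l ->
  (forall i, l i = 0 -> mu i = 0) -> \sum_i mu i *: a i = 0 ->
  (exists i, 0 < mu i) -> ~ (exists t, forall i, mu i = t * l i) ->
  exists2 l', pos_dependence a l' & (#|supp l'| < #|supp l|)%N.
Proof.
move=> [l_ge0 _ l_dep] mu_supp mu_dep [i0 mu_i0] not_prop.
have [i1 mu_i1 i1_min] :=
  arg_minP (P := fun i => 0 < mu i) (fun i => l i / mu i) mu_i0.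
(* [t] is the largest step keeping [l - t * mu] nonnegative; it kills [l i1] *)
set t := l i1 / mu i1.
have t_gt0 : 0 < t.
  rewrite divr_gt0 // lt_def l_ge0 andbT; apply: contraTneq mu_i1 => /mu_supp->.
  by rewrite ltxx.
have tmu_le i : t * mu i <= l i.
  have [mu_i|mu_le0] := ltP 0 (mu i); first by rewrite -ler_pdivlMr // i1_min.
  by apply: le_trans (l_ge0 i); rewrite mulr_ge0_le0 // ltW.
exists (fun i => l i - t * mu i).
  split=> [i||]; first by rewrite subr_ge0.
    apply: contra_notP not_prop => /forallNP l'_le0; exists t^-1 => i.
    have /eqP : l i - t * mu i = 0.
      by apply/eqP; rewrite eq_le subr_ge0 tmu_le andbT leNgt; apply/negP.
    by rewrite subr_eq0 => /eqP->; rewrite mulrA mulVf ?mul1r // gt_eqF.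
  under eq_bigr do rewrite scalerBl -scalerA.
  by rewrite sumrB -scaler_sumr l_dep mu_dep scaler0 subr0.
apply: proper_card; apply/properP; split.
  apply/fintype.subsetP => i; rewrite !inE; apply: contra => /eqP li0.
  by rewrite li0 mu_supp // mulr0 subr0.
exists i1; rewrite !inE; last by rewrite negbK /t divfK ?subrr // gt_eqF.
by apply: contraTneq mu_i1 => /mu_supp->; rewrite ltxx.
Qed.

Lemma ex_pos_circuit l : pos_dependence a l -> exists l', pos_circuit l'.
Proof.
have [k] := ubnP #|supp l|; elim: k l => // k IH l supp_lt l_dep.
have [|/not_andP[/(_ l_dep)[]|]] := pselect (pos_circuit l); first by exists l.
move=> /existsNP[mu /not_implyP[mu_supp /not_implyP[mu_dep not_prop]]].
have [nu [nu_supp nu_dep nu_pos not_prop']] : exists nu : I -> R,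
    [/\ forall i, l i = 0 -> nu i = 0, \sum_i nu i *: a i = 0,
        exists i, 0 < nu i & ~ exists t, forall i, nu i = t * l i].
  have [|/forallNP mu_le0] := pselect (exists i, 0 < mu i); first by exists mu.
  exists (fun i => - mu i); split.
  - by move=> i /mu_supp->; rewrite oppr0.
  - by under eq_bigr do rewrite scaleNr; rewrite sumrN mu_dep oppr0.
  - apply: contra_notP not_prop => /forallNP mu_ge0; exists 0 => i.
    rewrite mul0r; apply/eqP; rewrite eq_le !leNgt -oppr_gt0.
    by apply/andP; split; apply/negP.
  - move=> [t mu_t]; apply: not_prop; exists (- t) => i.
    by rewrite mulNr -mu_t opprK.
have [l' l'_dep lt_supp] :=
  pos_dependence_shrink l_dep nu_supp nu_dep nu_pos not_prop'.
exact: IH l' (leq_trans lt_supp supp_lt) l'_dep.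
Qed.

Lemma pos_circuit_enum l : pos_circuit l ->
  exists d (h : 'I_d.+1 -> I) (lam : 'I_d.+1 -> R),
    [/\ forall j, 0 < lam j, \sum_j lam j *: a (h j) = 0 &
        forall nu : 'I_d.+1 -> R, \sum_j nu j *: a (h j) = 0 ->
          exists t, forall j, nu j = t * lam j].
Proof.
move=> [[l_ge0 [i0 li0_gt0] l_dep] line].
have i0S : i0 \in supp l by rewrite inE gt_eqF.
have l_pos i : i \in supp l -> 0 < l i by rewrite inE lt_def l_ge0 andbT.
have sum_supp (F : I -> 'rV[R]_n) : (forall i, l i = 0 -> F i = 0) ->
    \sum_i F i = \sum_(j < #|supp l|) F (enum_val j).
  move=> F0; rewrite -big_enum_val [LHS](bigID (mem (supp l))) /= addrC.
  rewrite big1 ?add0r //.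
  by move=> i; rewrite inE negbK => /eqP/F0.
have : (0 < #|supp l|)%N by apply/card_gt0P; exists i0.
have : \sum_(j < #|supp l|) l (enum_val j) *: a (enum_val j) = 0.
  by rewrite -(sum_supp (fun i => l i *: a i)) // => i ->; rewrite scale0r.
have : forall nu : 'I_#|supp l| -> R,
    \sum_j nu j *: a (enum_val j) = 0 ->
    exists t, forall j, nu j = t * l (enum_val j).
  move=> nu nu_dep.
  pose mu i := if i \in supp l then nu (enum_rank_in i0S i) else 0.
  have muE j : mu (enum_val j) = nu j by rewrite /mu enum_valP enum_valK_in.
  have mu_supp i : l i = 0 -> mu i = 0 by move=> li0; rewrite /mu inE li0 eqxx.
  have [t mu_t] : exists t, forall i, mu i = t * l i.
    apply: (line _ mu_supp); rewrite (sum_supp (fun i => mu i *: a i)).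
      by rewrite -[RHS]nu_dep; apply: eq_bigr => j _; rewrite muE.
    by move=> i /mu_supp->; rewrite scale0r.
  by exists t => j; rewrite -muE mu_t.
move: (enum_val : 'I_#|supp l| -> I) (@enum_valP _ (supp l)).
case: #|supp l| => // d h hS line_h dep_h _.
exists d, h, (fun j => l (h j)); split=> // j.
by apply: l_pos; exact: hS.
Qed.

End PositiveCircuits.

Lemma row_free_dependence_line (R : fieldType) n d
    (c : 'I_d.+1 -> 'rV[R]_n) (lam : 'I_d.+1 -> R) :
  lam ord0 != 0 ->
  (forall nu : 'I_d.+1 -> R, \sum_j nu j *: c j = 0 ->
    exists t, forall j, nu j = t * lam j) ->
  row_free (\matrix_(i < d) c (lift ord0 i)).
Proof.
move=> lam0 line; apply: inj_row_free => v; rewrite mulmx_sum_row => v_dep.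
pose nu j := if unlift ord0 j is Some i then v 0 i else 0.
have [|t nu_t] := line nu.
  rewrite big_ord_recl /nu unlift_none scale0r add0r -[RHS]v_dep.
  by apply: eq_bigr => i _; rewrite liftK rowK.
have t0 : t = 0.
  have /esym/eqP := nu_t ord0; rewrite /nu unlift_none mulf_eq0 (negbTE lam0).
  by rewrite orbF => /eqP.
apply/rowP => i; rewrite mxE.
by have := nu_t (lift ord0 i); rewrite /nu liftK t0 mul0r.
Qed.

Section SimplexDecomposition.
Variables (R : realType) (n d : nat) (c : 'I_d.+1 -> 'rV[R]_n).
Variables lam beta : 'I_d.+1 -> R.
Hypotheses (lam_gt0 : forall j, 0 < lam j) (dep : \sum_j lam j *: c j = 0).
Hypothesis rfree : row_free (\matrix_(i < d) c (lift ord0 i)).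
Local Notation vec := 'rV[R]_n.
Local Notation slack j x := (beta j - dotv (c j) x).

Let B := \sum_j lam j * beta j.
Let C := \matrix_(i < d) c (lift ord0 i).

Let mulmx_CE x i : (x *m C^T) 0 i = dotv (c (lift ord0 i)) x.
Proof. by rewrite mulmx_trE rowK. Qed.

Let C_tr_full : row_full C^T.
Proof. by rewrite /row_full mxrank_tr (eqP rfree). Qed.

Lemma slack_surj (s : 'I_d.+1 -> R) : \sum_j lam j * s j = B ->
  exists x, forall j, slack j x = s j.
Proof.
move=> s_sum.
set x := \row_i (slack (lift ord0 i) 0 - s (lift ord0 i)) *m pinvmx C^T.
have x_lift i : slack (lift ord0 i) x = s (lift ord0 i).
  by rewrite -mulmx_CE mulmxKpV ?submx_full // mxE dotv0r; ring.
exists x => j; case: (unliftP ord0 j) => [i|] ->; first exact: x_lift.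
(* the slack of constraint [ord0] is determined by the others through [dep] *)
have := dependence_slack beta x dep; rewrite -/B -s_sum !big_ord_recl.
under eq_bigr do rewrite x_lift.
by move/addIr/(mulfI (lt0r_neq0 (lam_gt0 ord0))).
Qed.

Let delta_weighted k : \sum_j lam j * ((j == k)%:R * (B / lam j)) = B.
Proof.
rewrite (bigD1 k) //= eqxx mul1r mulrC divfK ?lt0r_neq0 // big1 ?addr0 // => j.
by move=> /negbTE->; rewrite mul0r mulr0.
Qed.

Definition vertex k : vec := sval (cid (slack_surj (delta_weighted k))).

Lemma vertex_slack j k : slack j (vertex k) = (j == k)%:R * (B / lam j).
Proof. by rewrite /vertex; case: cid => x /= ->. Qed.

Lemma conv_slack (mu : 'I_d.+1 -> R) j : \sum_k mu k = 1 ->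
  slack j (\sum_k mu k *: vertex k) = mu j * (B / lam j).
Proof.
move=> mu1; rewrite dotv_sumr -[X in X - _]mul1r -mu1 mulr_suml -sumrB.
under eq_bigr do rewrite dotvZr -mulrBr vertex_slack.
rewrite (bigD1 j) //= eqxx mul1r big1 ?addr0 // => k /negbTE.
by rewrite eq_sym => ->; rewrite mul0r mulr0.
Qed.

Hypothesis B_gt0 : 0 < B.

Let B_lam_neq0 j : B / lam j != 0.
Proof. by rewrite mulf_neq0 ?invr_eq0 ?lt0r_neq0. Qed.

Lemma aff_indep_vertex : aff_indep vertex.
Proof.
apply: inj_row_free => v; rewrite mulmx_sum_row => v0; apply/rowP => i.
have edge k : dotv (c (lift ord0 i)) (vertex (lift ord0 k) - vertex ord0) =
    - ((i == k)%:R * (B / lam (lift ord0 i))).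
  have := vertex_slack (lift ord0 i) ord0.
  have := vertex_slack (lift ord0 i) (lift ord0 k).
  rewrite dotvBr (inj_eq lift_inj) (eq_sym (lift ord0 i)).
  by rewrite (negbTE (neq_lift _ _)) mul0r; lra.
have := congr1 (dotv (c (lift ord0 i))) v0; rewrite dotv_sumr dotv0r.
under eq_bigr do rewrite rowK dotvZr edge.
rewrite (bigD1 i) //= eqxx mul1r big1 ?addr0 => [|k /negbTE]; last first.
  by rewrite eq_sym => ->; rewrite mul0r oppr0 mulr0.
move/eqP; rewrite mulrN oppr_eq0 mulf_eq0 (negbTE (B_lam_neq0 _)) orbF.
by rewrite mxE => /eqP.
Qed.

Let f : 'Hom(vec, 'rV[R]_d) := linfun (mulmxr C^T).
Let U := lker f.

Let memU u : u \in U <-> forall j, dotv (c j) u = 0.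
Proof.
rewrite memv_ker lfunE /=; split=> [/eqP uC j|uc]; last first.
  by apply/eqP/rowP => i; rewrite mulmx_CE uc mxE.
have uc_lift i : dotv (c (lift ord0 i)) u = 0 by rewrite -mulmx_CE uC mxE.
case: (unliftP ord0 j) => [i|] ->; first exact: uc_lift.
have := dependence_dotv u dep; rewrite big_ord_recl big1 => [|i _]; last first.
  by rewrite uc_lift mulr0.
by rewrite addr0 => /eqP; rewrite mulf_eq0 (negbTE (lt0r_neq0 _)) //= => /eqP.
Qed.

Let dimU : \dim U = (n - d)%N.
Proof.
have := limg_ker_dim f fullv; rewrite capfv.
have -> : (f @: fullv)%VS = fullv.
  apply/eqP; rewrite eqEsubv subvf /=; apply/subvP => y _.
  rewrite -[y](mulmxKpV (submx_full _ C_tr_full)).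
  by rewrite -[_ *m C^T]/(mulmxr C^T _) -lfunE memv_img ?memvf.
by rewrite !dimvf /dim /= !mul1n => /(canRL (addnK d)).
Qed.

Let polyhedron_msum : [set x | forall j, dotv (c j) x <= beta j] =
  [set x | exists2 y, conv_pts vertex y &
           exists2 z, [set u | u \in U] z & x = y + z].
Proof.
apply/seteqP; split=> [x x_le|_ [y [mu [mu_ge0 [mu1 ->]]] [z /memU z0 ->]] j].
  pose mu k := lam k * slack k x / B.
  have mu1 : \sum_k mu k = 1.
    by rewrite /mu -mulr_suml (dependence_slack beta x dep) divff ?lt0r_neq0.
  exists (\sum_k mu k *: vertex k).
    exists mu; split; last by split.
    by move=> k; rewrite /mu divr_ge0 ?mulr_ge0 ?subr_ge0 ?x_le // ltW.
  exists (x - \sum_k mu k *: vertex k); last by rewrite addrC subrK.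
  apply/memU => j; have := conv_slack j mu1.
  have -> : mu j * (B / lam j) = slack j x.
    by rewrite /mu; field; rewrite !lt0r_neq0.
  by rewrite dotvBr; lra.
rewrite dotvDr z0 addr0 -subr_ge0 conv_slack //.
by rewrite mulr_ge0 ?mu_ge0 // divr_ge0 ?ltW ?lam_gt0.
Qed.

Let msum_unique y1 y2 z1 z2 : conv_pts vertex y1 -> conv_pts vertex y2 ->
  z1 \in U -> z2 \in U -> y1 + z1 = y2 + z2 -> y1 = y2 /\ z1 = z2.
Proof.
move=> [mu1 [_ [mu1_1 ->]]] [mu2 [_ [mu2_1 ->]]] /memU z1_0 /memU z2_0 eq12.
have mu12 k : mu1 k = mu2 k.
  have := congr1 (fun x => slack k x) eq12; rewrite /= !dotvDr z1_0 z2_0 !addr0.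
  by rewrite !conv_slack // => /(mulIf (B_lam_neq0 k)).
have y12 : \sum_k mu1 k *: vertex k = \sum_k mu2 k *: vertex k.
  by apply: eq_bigr => k _; rewrite mu12.
by split=> //; move: eq12; rewrite y12 => /addrI.
Qed.

Lemma simplex_decomposition : exists (U : {vspace vec}) (D : set vec),
  [/\ \dim U = (n - d)%N, simplex D d &
      direct_msum [set x | forall j, dotv (c j) x <= beta j] D
        [set u | u \in U]].
Proof.
exists U, (conv_pts vertex); split.
- exact: dimU.
- by exists vertex; split; [exact: aff_indep_vertex|].
- by split; [exact: polyhedron_msum | exact: msum_unique].
Qed.

End SimplexDecomposition.

Section FullDimensional.
Variables (R : realType) (n : nat).
Local Notation vec := 'rV[R]_n.

Lemma aff_indep_dotv_const (p : 'I_n.+1 -> vec) (u : vec) :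
  aff_indep p -> (forall k, dotv u (p k) = dotv u (p ord0)) -> u = 0.
Proof.
rewrite /aff_indep row_free_unit -unitmx_tr -row_free_unit.
move=> /row_free_inj M_inj u_const.
apply: M_inj; rewrite mul0mx; apply/rowP => i.
by rewrite mulmx_trE rowK [RHS]mxE dotvC dotvBr u_const subrr.
Qed.

Lemma dependence_rhs_gt0 d (c : 'I_d.+1 -> vec) (lam beta : 'I_d.+1 -> R)
    (p : 'I_n.+1 -> vec) :
  (forall j, 0 < lam j) -> \sum_j lam j *: c j = 0 -> c ord0 != 0 ->
  aff_indep p -> (forall j k, dotv (c j) (p k) <= beta j) ->
  0 < \sum_j lam j * beta j.
Proof.
move=> lam_gt0 dep c0_neq0 p_indep p_le.
have slackE k := dependence_slack beta (p k) dep.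
have slack_ge0 k j : 0 <= lam j * (beta j - dotv (c j) (p k)).
  by rewrite mulr_ge0 ?subr_ge0 ?p_le ?ltW ?lam_gt0.
rewrite lt_def -(slackE ord0) sumr_ge0 ?andbT // (slackE ord0).
apply: contra c0_neq0 => /eqP B0; apply/eqP/(aff_indep_dotv_const p_indep).
suff tight k : dotv (c ord0) (p k) = beta ord0 by move=> k; rewrite !tight.
have /eqP := psumr_eq0P (fun j _ => slack_ge0 k j) (etrans (slackE k) B0)
  (i := ord0) isT.
by rewrite mulf_eq0 gt_eqF //= subr_eq0 => /eqP.
Qed.

Lemma dependence_size_gt1 d (c : 'I_d.+1 -> vec) (lam : 'I_d.+1 -> R) :
  lam ord0 != 0 -> c ord0 != 0 -> \sum_j lam j *: c j = 0 -> (1 < d.+1)%N.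
Proof.
case: d c lam => // c lam lam0_neq0 c0_neq0; rewrite big_ord1 => /eqP.
by rewrite scaler_eq0 (negbTE lam0_neq0) (negbTE c0_neq0).
Qed.

Lemma polyh_imset m k (a : 'I_m -> vec) (b : 'I_m -> R) (h : 'I_k -> 'I_m) :
  polyh a b (h @: [set: 'I_k]%SET) =
  [set x | forall j, dotv (a (h j)) x <= b (h j)].
Proof.
apply/seteqP; split=> x x_le => [j|_ /imsetP[j _ ->]]; last exact: x_le.
by apply/x_le/imset_f; rewrite finset.in_setT.
Qed.

End FullDimensional.

Theorem lemma5p3 (R : realType) (n m : nat)
  (a : 'I_m -> 'rV[R]_n) (b : 'I_m -> R) :
  (forall i, a i != 0) ->
  lattice_free (polyh a b [set: 'I_m]) ->
  exists I : {set 'I_m}, I != finset.set0 /\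
    exists (k : nat) (U : {vspace 'rV[R]_n}) (D : set 'rV[R]_n),
      [/\ (k < n)%N, \dim U = k, simplex D (n - k)%N &
          direct_msum (polyh a b I) D [set u | u \in U]].
Proof.
move=> a_neq0 [[[p [pM p_indep]] _] _ _ M_free].
have p_le k i : dotv (a i) (p k) <= b i by apply: pM; rewrite finset.in_setT.
have [[x x_pos]|[l l_dep _]] := gordan a [set: 'I_m].
  have neg_x i : dotv (a i) (- x) < 0.
    by rewrite dotvNr oppr_lt0 x_pos ?finset.in_setT.
  by have [z z_latt /M_free] := polyh_interior_lattice_point (pM ord0) neg_x.
have [l' /pos_circuit_enum[d [h [lam [lam_gt0 dep line]]]]] :=
  ex_pos_circuit l_dep.
have lam0_neq0 := lt0r_neq0 (lam_gt0 ord0).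
have rfree := row_free_dependence_line lam0_neq0 line.
have d_gt0 : (0 < d)%N := dependence_size_gt1 lam0_neq0 (a_neq0 (h ord0)) dep.
have d_le_n : (d <= n)%N by rewrite -(eqP rfree) rank_leq_col.
have B_gt0 := dependence_rhs_gt0 lam_gt0 dep (a_neq0 (h ord0)) p_indep
  (fun j k => p_le k (h j)).
have [U [D [dimU D_simplex D_msum]]] :=
  simplex_decomposition lam_gt0 dep rfree B_gt0.
exists (h @: [set: 'I_d.+1]%SET); split.
  by apply/set0Pn; exists (h ord0); rewrite imset_f.
exists (n - d)%N, U, D; rewrite subKn // polyh_imset; split=> //.
by rewrite ltn_subrL d_gt0 (leq_trans d_gt0 d_le_n).
Qed.
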